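(* Consider the setting in the context. Let $p\in[\bar h]$, $S=S_{\lfloor p/(\bar h-\delta+1)\rfloor}$ (so $i_p\in S$ and $|S|=\bar h-\delta+1$), $b\in[1,u]$, and let $\mathbf{C}$ be any codeword. Then the set of values $\{\sum_{g=0}^{u-1}\theta^{gm}c_{i_pu+g,a}: a\in[l],\ m\in[b]\}$ is determined by the data $\{\sum_{g=0}^{u-1}\theta^{gm}c_{i_pu+g,a},\ \sum_{g=0}^{u-1}\theta^{gm}c_{i_pu+g,a(i_p,a_{i_p}\oplus1)}: a\in[l],\ a|_S\in\mathcal V_0,\ m\in[b]\}$ together with $\{H_{i,i_p}(a,m)=\sum_{g=0}^{u-1}\theta^{gm}c_{i_pu+g,a}+\sum_{g=0}^{u-1}\theta^{gm}c_{i_pu+g,a(i,a_i\oplus1)}: i\in S\setminus\{i_p\},\ a\in[l],\ a|_S\in\mathcal V_0,\ m\in[b]\}$.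
   Context: $[N]=\{0,\dots,N-1\}$. Integers: $\bar n$, $u>1$, $\bar k$, $0\le v<u$, $n=\bar nu$, $k=\bar ku+v$, $r=n-k$; $\bar d=\bar k+1$; $\bar h,\delta$ with $\delta\in[1,\bar h)$, $\bar h-\delta+2=2^{\bar m}$ for some integer $\bar m\ge1$, and $(\bar h-\delta+1)\mid\bar h$. $l=2^{\bar n}$. $\mathbb{F}$ is a finite field with $|\mathbb{F}|\ge2n+1$ containing an element $\theta$ of multiplicative order $u$; $\xi$ is a primitive element and $\lambda_{i,j}=\xi^{2i+j}$ for $i\in[\bar n]$, $j\in\{0,1\}$. For $a\in[l]$ write $a=(a_{\bar n-1},\dots,a_0)$ in binary, and $a(i,j)$ is $a$ with its $i$-th bit replaced by $j$; $\oplus$ is addition mod 2. The code $\mathbf{C}$ consists of all $(c_{iu+g,a})_{i\in[\bar n],g\in[u],a\in[l]}$ over $\mathbb{F}$ with $\sum_{i=0}^{\bar n-1}\sum_{g=0}^{u-1}\theta^{gt}\lambda_{i,a_i}^tc_{iu+g,a}=0$ for all $t\in[r]$, $a\in[l]$. $\mathcal F=\{i_0,\dots,i_{\bar h-1}\}\subseteq[\bar n]$ are $\bar h$ distinct racks. $\mathcal V_0\subseteq\mathbb{F}_2^{2^{\bar m}-1}$ is the binary Hamming code of length $2^{\bar m}-1$, i.e. the kernel of a $\bar m\times(2^{\bar m}-1)$ binary matrix whose columns are all the nonzero vectors of $\mathbb{F}_2^{\bar m}$. For $q\in[\bar h/(\bar h-\delta+1))$, $S_q=\{i_{q'}: q'\in[q(\bar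 h-\delta+1),(q+1)(\bar h-\delta+1))\}$. For $J=\{j_0<\dots<j_{e-1}\}\subseteq[\bar n]$, the puncturing $a|_J=(a_{j_{e-1}},\dots,a_{j_0})\in\mathbb{F}_2^{e}$. *)

From HB Require Import structures.
From mathcomp Require Import all_boot all_order all_algebra.
Set Implicit Arguments. Unset Strict Implicit. Unset Printing Implicit Defensive.
Import GRing.Theory.

(* a in [l], l = 2^nbar, is represented by its binary digits (a_{nbar-1},...,a_0),
   i.e. a finite function 'I_nbar -> bool with  a i = a_i. *)
Definition word (nbar : nat) := {ffun 'I_nbar -> bool}.

Definition flip nbar (a : word nbar) (i : 'I_nbar) (j : bool) : word nbar :=
  [ffun k => if k == i then j else a k].

Definition lam (F : fieldType) (xi : F) (i : nat) (j : bool) : F :=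
  (xi ^+ (2 * i + j))%R.

(* c_{iu+g, a} is represented as c i g a.  The code C (with r parity checks). *)
Definition is_codeword (F : fieldType) nbar u (r : nat) (theta xi : F)
  (c : 'I_nbar -> 'I_u -> word nbar -> F) : Prop :=
  forall t : nat, (t < r)%N -> forall a : word nbar,
    (\sum_(i < nbar) \sum_(g < u)
        theta ^+ (g * t) * (lam xi i (a i)) ^+ t * c i g a)%R = 0%R.

Definition hamming_check mbar (H : 'M['F_2]_(mbar, 2 ^ mbar - 1)) : Prop :=
  [/\ (forall j, col j H != 0%R),
      injective (fun j => col j H) &
      (forall x : 'cV['F_2]_mbar, x != 0%R -> exists j, col j H = x)].

Definition in_hamming mbar (H : 'M['F_2]_(mbar, 2 ^ mbar - 1))
  (w : 'rV['F_2]_(2 ^ mbar - 1)) : bool :=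
  (H *m w^T == 0)%R.

(* puncturing a|_J = (a_{j_{e-1}}, ..., a_{j_0}) with j_0 < ... < j_{e-1} *)
Definition punct nbar (e : nat) (J : {set 'I_nbar}) (a : word nbar) : 'rV['F_2]_e :=
  \row_(k < e)
    ((nth false [seq a j | j <- rev (sort (fun x y : 'I_nbar => (x <= y)%N) (enum J))] k
      : nat)%:R)%R.

Definition Srack nbar hbar (rk : 'I_hbar -> 'I_nbar) (w q : nat) : {set 'I_nbar} :=
  [set rk q' | q' : 'I_hbar & (q * w <= q' < (q + 1) * w)%N].

Definition Xval (F : fieldType) nbar u (theta : F)
  (c : 'I_nbar -> 'I_u -> word nbar -> F) (i : 'I_nbar) (a : word nbar) (m : nat) : F :=
  (\sum_(g < u) theta ^+ (g * m) * c i g a)%R.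

Definition Hval (F : fieldType) nbar u (theta : F)
  (c : 'I_nbar -> 'I_u -> word nbar -> F) (i ip : 'I_nbar) (a : word nbar) (m : nat) : F :=
  (Xval theta c ip a m + Xval theta c ip (flip a i (~~ a i)) m)%R.

From HB Require Import structures.
From mathcomp Require Import all_boot all_order all_algebra.
Import GRing.Theory.
Set Implicit Arguments. Unset Strict Implicit.

(* A word outside the punctured Hamming code is one bit flip inside S away
   from it: the syndrome of its puncturing is nonzero, hence a column of the
   check matrix, and flipping the bit of S at that position zeroes it.  If
   the flipped rack is i_p itself, the value at a is given directly; otherwise
   H_{i,i_p} at the flipped word, minus the known value there, yields it. *)

Lemma addrr_F2 (z : 'F_2) : (z + z = 0)%R.
Proof. by rewrite addrr_pchar2 // pchar_Fp. Qed.

Lemma natr_negb_F2 (x : bool) : ((~~ x : nat)%:R = (x : nat)%:R + 1 :> 'F_2)%R.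
Proof. by case: x; [apply: val_inj | rewrite add0r]. Qed.

Lemma hamming_cover mbar (H : 'M['F_2]_(mbar, 2 ^ mbar - 1)) (w : 'rV_(2 ^ mbar - 1)) :
  hamming_check H -> ~~ in_hamming H w ->
  exists k, in_hamming H (w + delta_mx 0 k)%R.
Proof.
case=> _ _ Hcols Hw; have [k Hk] := Hcols _ Hw.
exists k; rewrite /in_hamming linearD /= mulmxDr trmx_delta -colE Hk.
by apply/eqP/matrixP => i j; rewrite !mxE addrr_F2.
Qed.

Section Puncturing.

Variable nbar : nat.
Implicit Types (J : {set 'I_nbar}) (a : word nbar).

Definition punct_positions J := rev (sort (fun x y : 'I_nbar => (x <= y)%N) (enum J)).

Lemma punct_positions_uniq J : uniq (punct_positions J).
Proof. by rewrite rev_uniq sort_uniq enum_uniq. Qed.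

Lemma mem_punct_positions J x : (x \in punct_positions J) = (x \in J).
Proof. by rewrite mem_rev mem_sort mem_enum. Qed.

Lemma size_punct_positions J : size (punct_positions J) = #|J|.
Proof. by rewrite size_rev size_sort cardE. Qed.

Lemma flipK a i : flip (flip a i (~~ a i)) i (~~ flip a i (~~ a i) i) = a.
Proof. by apply/ffunP => x; rewrite !ffunE eqxx negbK; case: eqP => [->|]. Qed.

Lemma punct_flip e J a x0 (k : 'I_e) : #|J| = e ->
  let i := nth x0 (punct_positions J) k in
  punct e J (flip a i (~~ a i)) = (punct e J a + delta_mx 0 k)%R.
Proof.
move=> cardJ i; apply/rowP => j; rewrite !mxE.
have lt_j : (j < size (punct_positions J))%N by rewrite size_punct_positions cardJ.
rewrite -/(punct_positions J) !(nth_map x0 _ _ lt_j) ffunE.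
have [->|neq_jk] := eqVneq j k; first by rewrite /i eqxx natr_negb_F2.
rewrite /i nth_uniq ?punct_positions_uniq ?size_punct_positions ?cardJ //.
by rewrite (inj_eq val_inj) (negbTE neq_jk) addr0.
Qed.

Lemma punct_hamming_cover mbar (H : 'M['F_2]_(mbar, 2 ^ mbar - 1)) J a :
  hamming_check H -> #|J| = 2 ^ mbar - 1 ->
  in_hamming H (punct _ J a) \/
  exists2 i, i \in J & in_hamming H (punct _ J (flip a i (~~ a i))).
Proof.
move=> HH cardJ; have [|/(hamming_cover HH) [k Hk]] := boolP (in_hamming _ _); first by left.
right; pose x0 := enum_val (cast_ord (esym cardJ) k).
exists (nth x0 (punct_positions J) k); last by rewrite punct_flip.
by rewrite -mem_punct_positions mem_nth // size_punct_positions cardJ.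
Qed.

End Puncturing.

Lemma card_ord_interval n lo hi : (hi <= n)%N ->
  #|[set i : 'I_n | (lo <= i < hi)%N]| = hi - lo.
Proof.
move=> le_hi_n; rewrite -sum1_card -[hi - lo]muln1 -sum_nat_const_nat.
rewrite (big_nat_widen _ _ _ _ _ le_hi_n) big_geq_mkord.
by apply: eq_bigl => i; rewrite inE andbC.
Qed.

Lemma card_Srack nbar hbar (rk : 'I_hbar -> 'I_nbar) w q :
  injective rk -> (w %| hbar)%N -> (q < hbar %/ w)%N -> #|Srack rk w q| = w.
Proof.
move=> rk_inj w_dvd lt_q; rewrite card_imset // card_ord_interval.
  by rewrite mulnDl mul1n addKn.
by rewrite -(divnK w_dvd) leq_mul2r addn1 lt_q orbT.
Qed.

Theorem lemma5 (F : finFieldType) (nbar u kbar v hbar delta mbar : nat)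
  (theta xi : F)
  (Hu : (1 < u)%N) (Hv : (v < u)%N)
  (Hdelta : (1 <= delta < hbar)%N) (Hmbar : (1 <= mbar)%N)
  (Hhm : hbar - delta + 2 = 2 ^ mbar) (Hdiv : (hbar - delta + 1) %| hbar)
  (HF : (2 * (nbar * u) + 1 <= #|F|)%N)
  (Htheta : (u.-primitive_root theta)%R) (Hxi : ((#|F|.-1).-primitive_root xi)%R)
  (rk : 'I_hbar -> 'I_nbar) (Hrk : injective rk)
  (H : 'M['F_2]_(mbar, 2 ^ mbar - 1)) (HH : hamming_check H)
  (p : 'I_hbar) (b : nat) (Hb : (1 <= b <= u)%N)
  (c c' : 'I_nbar -> 'I_u -> word nbar -> F)
  (Hc : is_codeword (nbar * u - (kbar * u + v)) theta xi c)
  (Hc' : is_codeword (nbar * u - (kbar * u + v)) theta xi c') :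
  let S := Srack rk (hbar - delta + 1) (p %/ (hbar - delta + 1)) in
  let V (a : word nbar) := in_hamming H (punct (2 ^ mbar - 1) S a) in
  (forall a, V a -> forall m, (m < b)%N ->
      Xval theta c (rk p) a m = Xval theta c' (rk p) a m /\
      Xval theta c (rk p) (flip a (rk p) (~~ a (rk p))) m =
      Xval theta c' (rk p) (flip a (rk p) (~~ a (rk p))) m) ->
  (forall i, i \in S -> i != rk p -> forall a, V a -> forall m, (m < b)%N ->
      Hval theta c i (rk p) a m = Hval theta c' i (rk p) a m) ->
  forall (a : word nbar) (m : nat), (m < b)%N ->
    Xval theta c (rk p) a m = Xval theta c' (rk p) a m.
Proof.
move=> S V known known_sums a m lt_mb.
have cardS : #|S| = 2 ^ mbar - 1.
  have w_gt0 : (0 < hbar - delta + 1)%N by rewrite addn1.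
  rewrite card_Srack ?ltn_divLR ?divnK //.
  by rewrite -Hhm addn1 addn2 subn1.
have [Va | [i iS Vai]] := punct_hamming_cover a HH cardS.
  by case: (known a Va m lt_mb).
rewrite -(flipK a i); have [eq_ip | neq_ip] := eqVneq i (rk p).
  by rewrite eq_ip in Vai *; case: (known _ Vai m lt_mb).
have := known_sums i iS neq_ip _ Vai m lt_mb; rewrite /Hval.
by case: (known _ Vai m lt_mb) => -> _ /addrI.
Qed.
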